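(* Let $p\in\{2,3\}$, and let \[ F(z) = {}_{2}F_{1} \left( \tfrac{1}{6}, \tfrac{5}{6} ; 1 ; 432z \right) = \sum_{m=0}^{\infty} A(m) z^{m}, \qquad F_{s}(z) = \sum_{m=0}^{p^{s}-1} A(m) z^{m}, \] where $A(m) = \frac{(6m)!}{(3m)!(2m)!m!} = \binom{3m}{m}\binom{6m}{3m}$. Then for every $s \in \mathbb{Z}_{\ge0}$ and $n\ge0$, \[ \frac{F(z)}{F(z^{p})} \equiv \frac{F_{s+1}(z)}{F_{s}(z^{p})} \pmod{p^{s+1}}, \qquad \frac{F^{(n)}(z)}{F(z)} \equiv \frac{F^{(n)}_{s+1}(z)}{F_{s+1}(z)} \pmod{p^{s+1}} , \] where $F^{(n)}$ denotes the $n$-th derivative.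
   Context: ${}_2F_1(a,b;c;z)=\sum_{m\ge0}\frac{(a)_m(b)_m}{(c)_m m!}z^m$. All series involved lie in $\mathbb{Z}[\![z]\!]$ with constant term 1 (hence are invertible); a congruence modulo $p^{s+1}$ means all coefficients of the difference are divisible by $p^{s+1}$. *)

From mathcomp Require Import all_boot all_order all_algebra.
Set Implicit Arguments. Unset Strict Implicit. Unset Printing Implicit Defensive.
Import Order.TTheory GRing.Theory Num.Theory.
Local Open Scope ring_scope.

Definition pseries := nat -> int.

Definition smul (f g : pseries) : pseries :=
  fun n => \sum_(i < n.+1) f i * g (n - i)%N.

Definition scompX (f : pseries) (p : nat) : pseries :=
  fun n => if (p %| n)%N then f (n %/ p)%N else 0.

Definition sderiv (n : nat) (f : pseries) : pseries :=
  fun k => f (k + n)%N * ((k + n) ^_ n)%:R.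

Fixpoint sinv_upto (f : pseries) (n : nat) : seq int :=
  match n with
  | 0 => [:: 1]
  | n'.+1 => let s := sinv_upto f n' in
             rcons s (- \sum_(i < n'.+1) f i.+1 * nth 0 s (n' - i)%N)
  end.

(* inverse of a series with constant term 1 (all series below have f 0 = 1) *)
Definition sinv (f : pseries) : pseries := fun n => nth 0 (sinv_upto f n) n.

Definition scong (m : int) (f g : pseries) : Prop :=
  forall k, (m %| f k - g k)%Z.

Definition Acoef (m : nat) : int := ('C(3 * m, m) * 'C(6 * m, 3 * m))%N%:Z.

Definition Fser : pseries := Acoef.

Definition Ftrunc (p s : nat) : pseries :=
  fun m => if (m < p ^ s)%N then Acoef m else 0.

(* Write A(m) = A(m %/ p) g(m). Since n! = p^(n/p) (n/p)! P(n), with P(n) the product of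
   the k <= n prime to p, g is a ratio of values of P; hence g is p-integral and, by the
   Wilson-type periodicity of P, g(x + m p^j) = g(x) mod p^j. Dwork's induction over
   the p-adic digits of the indices then gives
     F(z) F_s(z^p) = F_(s+1)(z) F(z^p)  mod p^(s+1),
   which is the first congruence. For the second, with theta = z d/dz,
     theta F / F = theta(F / F(z^p)) * F(z^p) / F + p (theta F / F)(z^p),
   and the same identity for F_(s+1) and F_s(z^p); so the first congruence and induction
   on s give theta F / F = theta F_s / F_s mod p^s. Cancelling z and using
   D^(n+1) F / F = D (D^n F / F) + (D^n F / F) (D F / F) gives all higher derivatives.
   Power series are handled over Q, tracking p-integrality of their coefficients. *)

From HB Require Import structures.
From mathcomp Require Import all_boot all_order all_algebra.
From mathcomp Require Import ring zify.
From mathcomp Require boolp.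
Import Order.TTheory GRing.Theory Num.Theory.
Set Implicit Arguments. Unset Strict Implicit. Unset Printing Implicit Defensive.

Section PIntegralRationals.
Local Open Scope ring_scope.
Variable p : nat.
Hypothesis p_prime : prime p.

(* [pZ e x] says that x lies in p^e Z_(p), i.e. has p-adic valuation >= e. *)
Definition pZ (e : nat) (x : rat) : Prop :=
  exists (n : int) (d : nat), coprime p d /\ x * d%:R = p%:R ^+ e * n%:~R.

Lemma pnatr_neq0 : p%:R != 0 :> rat.
Proof. by rewrite pnatr_eq0 -lt0n prime_gt0. Qed.

Lemma pZ_int (z : int) : pZ 0 z%:~R.
Proof. by exists z, 1%N; rewrite coprimen1 mulr1 expr0 mul1r. Qed.

Lemma pZ_nat (n : nat) : pZ 0 n%:R.
Proof. by rewrite pmulrn; apply: pZ_int. Qed.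

Lemma pZ0 e : pZ e 0.
Proof. by exists 0, 1%N; rewrite coprimen1 mul0r mulr0. Qed.

Lemma pZD e x y : pZ e x -> pZ e y -> pZ e (x + y).
Proof.
move=> [n1 [d1 [cd1 e1]]] [n2 [d2 [cd2 e2]]].
exists (n1 * d2%:Z + n2 * d1%:Z), (d1 * d2)%N; rewrite coprimeMr cd1 cd2.
split => //; rewrite natrM intrD !intrM -!pmulrn.
have -> : (x + y) * (d1%:R * d2%:R) = x * d1%:R * d2%:R + y * d2%:R * d1%:R by ring.
by rewrite e1 e2; ring.
Qed.

Lemma pZN e x : pZ e x -> pZ e (- x).
Proof. by move=> [n [d [cd E]]]; exists (- n), d; rewrite mulNr E intrN mulrN. Qed.

Lemma pZB e x y : pZ e x -> pZ e y -> pZ e (x - y).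
Proof. by move=> hx hy; apply/pZD/pZN. Qed.

Lemma pZM e f x y : pZ e x -> pZ f y -> pZ (e + f) (x * y).
Proof.
move=> [n1 [d1 [cd1 e1]]] [n2 [d2 [cd2 e2]]].
exists (n1 * n2), (d1 * d2)%N; rewrite coprimeMr cd1 cd2.
split => //; rewrite natrM exprD intrM.
have -> : x * y * (d1%:R * d2%:R) = x * d1%:R * (y * d2%:R) by ring.
by rewrite e1 e2; ring.
Qed.

Lemma pZMl e x y : pZ 0 x -> pZ e y -> pZ e (x * y).
Proof. exact: (@pZM 0). Qed.

Lemma pZMr e x y : pZ e x -> pZ 0 y -> pZ e (x * y).
Proof. by move=> hx hy; rewrite -[e]addn0; apply: pZM. Qed.

Lemma pZW e e' x : (e' <= e)%N -> pZ e x -> pZ e' x.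
Proof.
move=> le_e [n [d [cd E]]]; exists (n * (p ^ (e - e'))%N%:Z), d.
split => //; rewrite E intrM -pmulrn natrX -{1}(subnKC le_e) exprD; ring.
Qed.

Lemma pZ_pM e x : pZ e x -> pZ e.+1 (p%:R * x).
Proof. by move=> [n [d [cd E]]]; exists n, d; rewrite -mulrA E exprS mulrA. Qed.

Lemma pZ_divp e x : pZ e.+1 x -> pZ e (x / p%:R).
Proof.
move=> [n [d [cd E]]]; exists n, d; split => //.
by rewrite mulrAC E exprS; field; apply: pnatr_neq0.
Qed.

Lemma pZ_sum e (I : Type) (r : seq I) (P : pred I) (F : I -> rat) :
  (forall i, P i -> pZ e (F i)) -> pZ e (\sum_(i <- r | P i) F i).
Proof. by move=> hF; apply: (big_ind (pZ e)) => //; [apply: pZ0 | apply: pZD]. Qed.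

Lemma pZ_dvdz e (z : int) : pZ e z%:~R -> ((p ^ e)%N%:Z %| z)%Z.
Proof.
move=> [n [d [cd E]]].
have Ez : z * d%:Z = (p ^ e)%N%:Z * n.
  by apply: (@intr_inj rat); rewrite !intrM -!pmulrn E natrX.
have cop : coprimez (p ^ e)%N%:Z d%:Z by have : coprime (p ^ e) d by rewrite coprimeXl.
by rewrite -(Gauss_dvdzl _ cop) Ez dvdz_mulr.
Qed.

Lemma pZ_natr_mod e a b d : a = b %[mod p ^ e] -> coprime p d ->
  pZ e ((a%:R - b%:R) / d%:R).
Proof.
move=> eab cpd; exists ((a %/ p ^ e)%N%:Z - (b %/ p ^ e)%N%:Z), d; split => //.
have d_gt0 : (0 < d)%N.
  by case: d cpd => // /eqP; rewrite gcdn0 => p1; move: p_prime; rewrite p1.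
rewrite divfK ?pnatr_eq0 -?lt0n //.
rewrite {1}(divn_eq a (p ^ e)) {1}(divn_eq b (p ^ e)) eab !natrD !natrM natrX.
by rewrite intrB -!pmulrn; ring.
Qed.

End PIntegralRationals.


Section Convolution.
Local Open Scope ring_scope.
Implicit Types f g h : nat -> rat.

Definition conv f g (n : nat) : rat := \sum_(i < n.+1) f i * g (n - i)%N.

Definition poly_upto n f : {poly rat} := \poly_(i < n.+1) f i.

Lemma coef_poly_upto n f i : (i <= n)%N -> (poly_upto n f)`_i = f i.
Proof. by move=> le_in; rewrite coef_poly ltnS le_in. Qed.

Lemma conv_coefM f g (P Q : {poly rat}) n :
  (forall i, (i <= n)%N -> P`_i = f i) -> (forall i, (i <= n)%N -> Q`_i = g i) ->
  conv f g n = (P * Q)`_n.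
Proof.
move=> hP hQ; rewrite coefM; apply: eq_bigr => i _.
by rewrite hP -1?ltnS // hQ // leq_subr.
Qed.

Lemma convC f g : conv f g =1 conv g f.
Proof.
move=> n; rewrite (conv_coefM (@coef_poly_upto n f) (@coef_poly_upto n g)).
by rewrite (conv_coefM (@coef_poly_upto n g) (@coef_poly_upto n f)) mulrC.
Qed.

Lemma convA f g h : conv (conv f g) h =1 conv f (conv g h).
Proof.
move=> n; have conv_upto f1 f2 i : (i <= n)%N ->
    (poly_upto n f1 * poly_upto n f2)`_i = conv f1 f2 i.
  by move=> le_in; symmetry; apply: conv_coefM => j le_ji;
    apply: coef_poly_upto; apply: leq_trans le_in.
rewrite (conv_coefM (conv_upto f g) (@coef_poly_upto n h)).
by rewrite (conv_coefM (@coef_poly_upto n f) (conv_upto g h)) mulrA.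
Qed.

Lemma eq_conv f f' g g' : f =1 f' -> g =1 g' -> conv f g =1 conv f' g'.
Proof. by move=> ef eg n; apply: eq_bigr => i _; rewrite ef eg. Qed.

Lemma convDl f g h : conv (fun i => f i + g i) h =1 (fun n => conv f h n + conv g h n).
Proof. by move=> n; rewrite /conv -big_split; apply: eq_bigr => i _; rewrite mulrDl. Qed.

Lemma convDr f g h : conv h (fun i => f i + g i) =1 (fun n => conv h f n + conv h g n).
Proof. by move=> n; rewrite convC convDl !(convC h). Qed.

Lemma convBl f g h : conv (fun i => f i - g i) h =1 (fun n => conv f h n - conv g h n).
Proof. by move=> n; rewrite /conv -sumrB; apply: eq_bigr => i _; rewrite mulrBl. Qed.

Lemma conv0r f : conv f (fun _ => 0) =1 (fun _ => 0).
Proof. by move=> n; rewrite /conv big1 // => i _; rewrite mulr0. Qed.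

Lemma conv0l f : conv (fun _ => 0) f =1 (fun _ => 0).
Proof. by move=> n; rewrite convC conv0r. Qed.

Lemma conv_delta f : conv f (fun i => (i == 0)%N%:R) =1 f.
Proof.
move=> n; rewrite /conv big_ord_recr /= subnn eqxx mulr1 big1 ?add0r // => i _.
by rewrite subn_eq0 leqNgt ltn_ord mulr0.
Qed.

Lemma conv_square f g n K : (n < K)%N ->
  conv f g n = \sum_(i < K) \sum_(j < K) (if (i + j == n)%N then f i * g j else 0).
Proof.
move=> lt_nK; rewrite /conv (big_ord_widen K (fun i => f i * g (n - i)%N) lt_nK).
rewrite big_mkcond; apply: eq_bigr => i _; rewrite ltnS.
case: leqP => [le_in | lt_ni]; last by rewrite big1 // => j _; case: eqP => //; lia.
rewrite -big_mkcond (eq_bigl (fun j : 'I_K => nat_of_ord j == (n - i)%N)).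
  by rewrite (big_ord1_eq _ (fun j => f i * g j)) ifT //; lia.
by move=> j; apply/eqP/eqP; lia.
Qed.

Section Residues.
Variable p : nat.
Hypothesis p_gt0 : (0 < p)%N.

Definition psect (b : nat) f : nat -> rat := fun x => f (b + p * x)%N.

Lemma sum_residues K (F : nat -> rat) :
  \sum_(i < K * p) F i = \sum_(b < p) \sum_(x < K) F (b + p * x)%N.
Proof.
elim: K => [|K IH]; first by rewrite mul0n big_ord0 big1 // => b _; rewrite big_ord0.
rewrite mulSnr big_split_ord /= IH -big_split; apply: eq_bigr => b _ /=.
by rewrite big_ord_recr addnC mulnC.
Qed.

Lemma residue_addn_eq b c x y n :
  (b + p * x + (c + p * y) == n)%N =
  [&& b + c <= n, p %| n - (b + c) & x + y == (n - (b + c)) %/ p]%N.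
Proof.
apply/eqP/and3P => [<- | [le_bcn dvd_p /eqP exy]].
  have -> : (b + p * x + (c + p * y) - (b + c) = p * (x + y))%N by lia.
  by rewrite dvdn_mulr // mulKn // eqxx; split=> //; lia.
by move: (divnK dvd_p); rewrite -exy; lia.
Qed.

Lemma conv_psect f g n :
  conv f g n = \sum_(b < p) \sum_(c < p)
    (if ((b + c <= n) && (p %| n - (b + c)))%N
     then conv (psect b f) (psect c g) ((n - (b + c)) %/ p)%N else 0).
Proof.
have lt_n : (n < n.+1 * p)%N by rewrite (leq_trans (ltnSn n)) // leq_pmulr.
rewrite (conv_square f g lt_n) (sum_residues _
  (fun i => \sum_(j < n.+1 * p) if (i + j == n)%N then f i * g j else 0)).
apply: eq_bigr => b _; under eq_bigr => x _ do rewrite (sum_residues _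
  (fun j => if (b + p * x + j == n)%N then f (b + p * x)%N * g j else 0)).
rewrite exchange_big /=; apply: eq_bigr => c _.
case: ifP => cond.
  have lt_m : ((n - (b + c)) %/ p < n.+1)%N.
    by rewrite ltnS (leq_trans (leq_div _ _)) // leq_subr.
  rewrite (conv_square _ _ lt_m); apply: eq_bigr => x _; apply: eq_bigr => y _.
  by rewrite residue_addn_eq andbA cond.
rewrite big1 // => x _; rewrite big1 // => y _.
by rewrite residue_addn_eq andbA cond.
Qed.

Definition frob h : nat -> rat := fun n => if (p %| n)%N then h (n %/ p)%N else 0.

Lemma eq_frob h h' : h =1 h' -> frob h =1 frob h'.
Proof. by move=> eh n; rewrite /frob eh. Qed.

Lemma dvdn_residue b x : (b < p)%N -> (p %| b + p * x)%N = (b == 0)%N.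
Proof.
move=> lt_bp; rewrite dvdn_addl ?dvdn_mulr //.
by case: b lt_bp => [|b] lt_bp; rewrite ?dvdn0 // gtnNdvd.
Qed.

Lemma divn_residue b x : (b < p)%N -> ((b + p * x) %/ p = x)%N.
Proof. by move=> lt_bp; rewrite mulnC divnDMl // divn_small. Qed.

Lemma psect_frob b h x : (b < p)%N -> psect b (frob h) x = if (b == 0)%N then h x else 0.
Proof.
by move=> lt_bp; rewrite /psect /frob dvdn_residue //; case: eqP => // ->; rewrite divn_residue.
Qed.

End Residues.
End Convolution.

Section DworkLemma.
Local Open Scope ring_scope.
Variable p : nat.
Hypothesis p_prime : prime p.
Variables A g : nat -> rat.
Hypothesis A_rec : forall x, A x = g x * A (x %/ p)%N.
Hypothesis A_int : forall x, pZ p 0 (A x).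
Hypothesis g_int : forall x, pZ p 0 (g x).
Hypothesis g_cong : forall j x m, pZ p j (g (x + m * p ^ j)%N - g x).

Let p_gt0 : (0 < p)%N := prime_gt0 p_prime.

Definition weight (u : nat -> rat) : nat -> rat := fun i => A i * u i.
Definition upper t (f : nat -> rat) : nat -> rat :=
  fun i => if (p ^ t <= i)%N then f i else 0.
Definition lower t (f : nat -> rat) : nat -> rat :=
  fun i => if (i < p ^ t)%N then f i else 0.

Definition cross t u v n :=
  conv (upper t (weight u)) (lower t (weight v)) n
  - conv (upper t (weight v)) (lower t (weight u)) n.

Definition plip (u : nat -> rat) :=
  (forall x, pZ p 0 (u x)) /\ (forall j x m, pZ p j.+1 (u (x + m * p ^ j)%N - u x)).

Definition gsect (u : nat -> rat) b : nat -> rat := fun x => psect p b g x * psect p b u x.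

Definition dquot (u : nat -> rat) b : nat -> rat := fun x => (psect p b u x - u b) / p%:R.

Lemma eq_cross t u u' v v' : u =1 u' -> v =1 v' -> cross t u v =1 cross t u' v'.
Proof.
by move=> eu ev n; rewrite /cross; congr (_ - _); apply: eq_conv => i;
  rewrite /upper /lower /weight ?eu ?ev.
Qed.

Lemma cross_expand t u v n : cross t u v n = \sum_(i < n.+1)
  upper t A i * lower t A (n - i)%N * (u i * v (n - i)%N - v i * u (n - i)%N).
Proof.
rewrite /cross /conv -sumrB; apply: eq_bigr => i _.
by rewrite /upper /lower /weight; do 2 case: ifP => _; ring.
Qed.

Lemma cross_linl t a b u1 u2 u v n : u =1 (fun i => a * u1 i + b * u2 i) ->
  cross t u v n = a * cross t u1 v n + b * cross t u2 v n.
Proof.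
move=> eu; rewrite !cross_expand !mulr_sumr -big_split; apply: eq_bigr => i _ /=.
by rewrite !eu; ring.
Qed.

Lemma cross_linr t a b v1 v2 u v n : v =1 (fun i => a * v1 i + b * v2 i) ->
  cross t u v n = a * cross t u v1 n + b * cross t u v2 n.
Proof.
move=> ev; rewrite !cross_expand !mulr_sumr -big_split; apply: eq_bigr => i _ /=.
by rewrite !ev; ring.
Qed.

Lemma leq_expS_residue t b x : (b < p)%N -> (p ^ t.+1 <= b + p * x)%N = (p ^ t <= x)%N.
Proof.
move=> lt_bp; rewrite expnS; apply/idP/idP => [|le_tx]; last first.
  by rewrite (leq_trans _ (leq_addl b _)) // leq_mul2l le_tx orbT.
apply: contraLR; rewrite -!ltnNge => lt_xt.
have : (p * x.+1 <= p * p ^ t)%N by rewrite leq_mul2l lt_xt orbT.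
by rewrite mulnS; lia.
Qed.

Lemma psect_upper t u b : (b < p)%N ->
  psect p b (upper t.+1 (weight u)) =1 upper t (weight (gsect u b)).
Proof.
move=> lt_bp x; rewrite /psect /upper /weight /gsect /psect leq_expS_residue //.
by rewrite A_rec divn_residue //; case: ifP => _ //; ring.
Qed.

Lemma psect_lower t u b : (b < p)%N ->
  psect p b (lower t.+1 (weight u)) =1 lower t (weight (gsect u b)).
Proof.
move=> lt_bp x; rewrite /psect /lower /weight /gsect /psect ltnNge leq_expS_residue //.
by rewrite -ltnNge A_rec divn_residue //; case: ifP => _ //; ring.
Qed.

Lemma cross_rec t u v n : cross t.+1 u v n = \sum_(b < p) \sum_(c < p)
    (if ((b + c <= n) && (p %| n - (b + c)))%N
     then cross t (gsect u b) (gsect v c) ((n - (b + c)) %/ p)%N else 0).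
Proof.
rewrite /cross (conv_psect p_gt0 (upper t.+1 (weight u))).
rewrite (conv_psect p_gt0 (upper t.+1 (weight v))).
rewrite [X in _ - X]exchange_big -sumrB; apply: eq_bigr => b _.
rewrite -sumrB; apply: eq_bigr => c _ /=; rewrite (addnC c b).
case: ifP => _; last by rewrite subr0.
by congr (_ - _); apply: eq_conv; (apply: psect_upper || apply: psect_lower).
Qed.

Lemma plip_const c : pZ p 0 c -> plip (fun _ => c).
Proof. by move=> hc; split => // j x m; rewrite subrr; apply: pZ0. Qed.

Lemma plip_mul u v : plip u -> plip v -> plip (fun x => u x * v x).
Proof.
move=> [u0 u1] [v0 v1]; split => [x|j x m]; first exact: pZMl.
have -> : u (x + m * p ^ j)%N * v (x + m * p ^ j)%N - u x * v x =
  u (x + m * p ^ j)%N * (v (x + m * p ^ j)%N - v x) + (u (x + m * p ^ j)%N - u x) * v x.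
  by ring.
by apply: pZD; [apply: pZMl | apply: pZMr].
Qed.

Lemma psect_shift b x m j : (b + p * (x + m * p ^ j) = (b + p * x) + m * p ^ j.+1)%N.
Proof. by rewrite expnS; ring. Qed.

Lemma plip_psect u b : plip u -> plip (psect p b u).
Proof.
move=> [u0 u1]; split => [x|j x m]; first exact: u0.
by rewrite /psect psect_shift; apply: pZW (leqnSn _) (u1 _ _ _).
Qed.

Lemma plip_psect_g b : plip (psect p b g).
Proof. by split => [x|j x m]; rewrite /psect ?psect_shift. Qed.

Lemma plip_gsect u b : plip u -> plip (gsect u b).
Proof. by move=> hu; apply: plip_mul; [apply: plip_psect_g | apply: plip_psect]. Qed.

Lemma plip_dquot u b : plip u -> plip (dquot u b).
Proof.
move=> [u0 u1]; split => [x|j x m].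
  by apply: pZ_divp => //; have := u1 0%N b (p * x)%N; rewrite expn0 muln1.
rewrite /dquot -mulrBl; apply: pZ_divp => //.
have -> : psect p b u (x + m * p ^ j) - u b - (psect p b u x - u b) =
   u (b + p * x + m * p ^ j.+1)%N - u (b + p * x)%N by rewrite /psect psect_shift; ring.
exact: u1.
Qed.

Lemma plip_diff u x y : plip u -> pZ p 1 (u x - u y).
Proof.
move=> [_ u1]; have u1_0 z : pZ p 1 (u z - u 0%N).
  by have := u1 0%N 0%N z; rewrite expn0 muln1 add0n.
have -> : u x - u y = (u x - u 0%N) - (u y - u 0%N) by ring.
exact: pZB.
Qed.

Lemma pZ_cross0 u v n : plip u -> plip v -> pZ p 1 (cross 0 u v n).
Proof.
move=> hu hv; rewrite cross_expand; apply: pZ_sum => i _.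
have wt_int : pZ p 0 (upper 0 A i * lower 0 A (n - i)%N).
  rewrite /upper /lower; do 2 case: ifP => _; rewrite ?mul0r ?mulr0;
  by [apply: pZ0 | apply: pZMl].
apply: pZMl => //.
have -> : u i * v (n - i)%N - v i * u (n - i)%N =
  (u i - u 0%N) * v (n - i)%N + u 0%N * (v (n - i)%N - v 0%N)
  - ((v i - v 0%N) * u (n - i)%N + v 0%N * (u (n - i)%N - u 0%N)) by ring.
have [[u0 _] [v0 _]] := (hu, hv).
by apply: pZB; apply: pZD; [apply: pZMr | apply: pZMl | apply: pZMr | apply: pZMl];
  by [apply: plip_diff | apply: u0 | apply: v0].
Qed.

(* Writing [gsect u b = u b * g_b + p * g_b * dquot u b], bilinearity of [cross]
   moves the leading term out and leaves p times crosses of plip functions. *)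
Lemma cross_gsect t u v b c n :
  (forall u v n, plip u -> plip v -> pZ p t.+1 (cross t u v n)) ->
  plip u -> plip v ->
  pZ p t.+2 (cross t (gsect u b) (gsect v c) n
             - u b * v c * cross t (psect p b g) (psect p c g) n).
Proof.
move=> IH hu hv.
have split_gsect (w : nat -> rat) d :
    gsect w d =1 (fun x => w d * psect p d g x + p%:R * (psect p d g x * dquot w d x)).
  by move=> x; rewrite /gsect /dquot; field; apply: pnatr_neq0.
rewrite (cross_linl _ _ _ (split_gsect u b)) (cross_linr _ _ _ (split_gsect v c)).
set gu := fun x => _ * dquot u b x; set gv := fun x => _ * dquot v c x.
have -> : u b * (v c * cross t (psect p b g) (psect p c g) n
      + p%:R * cross t (psect p b g) gv n) + p%:R * cross t gu (gsect v c) n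
      - u b * v c * cross t (psect p b g) (psect p c g) n
    = p%:R * (u b * cross t (psect p b g) gv n + cross t gu (gsect v c) n) by ring.
have lip_gu : plip gu by apply: plip_mul; [apply: plip_psect_g | apply: plip_dquot].
have lip_gv : plip gv by apply: plip_mul; [apply: plip_psect_g | apply: plip_dquot].
apply: pZ_pM; apply: pZD; last by apply: IH => //; apply: plip_gsect.
by apply: pZMl; [case: hu | apply: IH => //; apply: plip_psect_g].
Qed.

(* Subtracting u 0 * v 0 times the vanishing [cross t.+1 1 1] and splitting by
   residues ([cross_rec]), every section term becomes a multiple of p. *)
Theorem pZ_cross t u v n : plip u -> plip v -> pZ p t.+1 (cross t u v n).
Proof.
elim: t u v n => [|t IH] u v n hu hv; first exact: pZ_cross0.
have -> : cross t.+1 u v n =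
    cross t.+1 u v n - u 0%N * v 0%N * cross t.+1 (fun=> 1) (fun=> 1) n.
  by rewrite [cross _ (fun=> 1) _ _]/cross subrr mulr0 subr0.
rewrite !cross_rec mulr_sumr -sumrB; apply: pZ_sum => b _.
rewrite mulr_sumr -sumrB; apply: pZ_sum => c _.
case: ifP => _; last by rewrite mulr0 subr0; apply: pZ0.
set m := ((n - (b + c)) %/ p)%N.
have gsect1 d : gsect (fun=> 1) d =1 psect p d g by move=> x; rewrite /gsect mulr1.
rewrite (eq_cross _ (gsect1 b) (gsect1 c)).
have -> : cross t (gsect u b) (gsect v c) m
      - u 0%N * v 0%N * cross t (psect p b g) (psect p c g) m =
    (cross t (gsect u b) (gsect v c) m - u b * v c * cross t (psect p b g) (psect p c g) m)
    + (u b * v c - u 0%N * v 0%N) * cross t (psect p b g) (psect p c g) m by ring.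
apply: pZD; first exact: cross_gsect.
apply: (@pZM _ 1); last by apply: IH; apply: plip_psect_g.
have -> : u b * v c - u 0%N * v 0%N = (u b - u 0%N) * v c + u 0%N * (v c - v 0%N) by ring.
have [[u0 _] [v0 _]] := (hu, hv).
by apply: pZD; [apply: pZMr | apply: pZMl] => //; apply: plip_diff.
Qed.

Definition trunc s : nat -> rat := fun m => if (m < p ^ s)%N then A m else 0.

Lemma cross_full s u v n :
  conv (weight u) (lower s (weight v)) n - conv (lower s (weight u)) (weight v) n
  = cross s u v n.
Proof.
have split_weight w : weight w =1 (fun i => upper s (weight w) i + lower s (weight w) i).
  by move=> i; rewrite /upper /lower; case: leqP => _; rewrite ?addr0 ?add0r.
rewrite (eq_conv (split_weight u) (frefl _) n) (eq_conv (frefl _) (split_weight v) n).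
by rewrite convDl convDr /cross (convC (lower s _) (upper s _)); ring.
Qed.

(* After splitting by residues only the sections with c = 0 survive, and each of
   them is a [cross] of plip functions. *)
Theorem dwork_congruence s n :
  pZ p s.+1 (conv A (frob p (trunc s)) n - conv (trunc s.+1) (frob p A) n).
Proof.
rewrite (conv_psect p_gt0 A) (conv_psect p_gt0 (trunc s.+1)) -sumrB.
apply: pZ_sum => b _; rewrite -sumrB; apply: pZ_sum => c _.
case: ifP => _; last by rewrite subrr; apply: pZ0.
set m := ((n - (b + c)) %/ p)%N.
have [c0 | c_neq0] := eqVneq (nat_of_ord c) 0%N; last first.
  have frob_c h : psect p c (frob p h) =1 (fun=> 0).
    by move=> x; rewrite psect_frob // (negbTE c_neq0).
  by rewrite (eq_conv (frefl _) (frob_c _) m) (eq_conv (frefl _) (frob_c _) m) !conv0r subrr;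
    apply: pZ0.
have frob_c h : psect p c (frob p h) =1 h by move=> x; rewrite psect_frob // c0.
have sect_A : psect p b A =1 weight (psect p b g).
  by move=> x; rewrite /psect /weight A_rec divn_residue // mulrC.
have sect_trunc : psect p b (trunc s.+1) =1 lower s (weight (psect p b g)).
  move=> x; rewrite /psect /trunc /lower /weight ltnNge leq_expS_residue // -ltnNge.
  by case: ifP => _ //; rewrite A_rec divn_residue // mulrC.
have trunc_1 : trunc s =1 lower s (weight (fun=> 1)).
  by move=> x; rewrite /trunc /lower /weight mulr1.
have A_1 : A =1 weight (fun=> 1) by move=> x; rewrite /weight mulr1.
rewrite (eq_conv sect_A (ftrans (frob_c _) trunc_1) m).
rewrite (eq_conv sect_trunc (ftrans (frob_c _) A_1) m) cross_full.
apply: pZ_cross; first exact: plip_psect_g.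
exact/plip_const/(pZ_nat p 1).
Qed.

End DworkLemma.

Section PFreeFactorial.
Variable p : nat.
Hypothesis p_prime : prime p.

Fixpoint pfact (n : nat) : nat :=
  if n is n'.+1 then (if p %| n then 1 else n) * pfact n' else 1.

Lemma coprime_pfact n : coprime p (pfact n).
Proof.
elim: n => [|n IH] /=; first exact: coprimen1.
rewrite coprimeMr IH andbT; case: ifP => [_|]; first exact: coprimen1.
by rewrite prime_coprime // => ->.
Qed.

Lemma pfact_gt0 n : 0 < pfact n.
Proof. by elim: n => //= n IH; rewrite muln_gt0 IH andbT; case: ifP. Qed.

Lemma fact_pfact n : n`! = p ^ (n %/ p) * (n %/ p)`! * pfact n.
Proof.
have p_gt0 := prime_gt0 p_prime.
elim: n => [|n IH]; first by rewrite div0n.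
rewrite factS /= IH (divnS _ p_gt0); case: ifP => dvd_pn /=; last by rewrite add0n; ring.
have -> : n.+1 = (n %/ p).+1 * p by rewrite -{1}(divnK dvd_pn) (divnS _ p_gt0) dvd_pn.
by rewrite add1n factS expnS; ring.
Qed.

Lemma pfact_shift k n : 0 < k -> pfact (n + p ^ k) = pfact n * pfact (p ^ k) %[mod p ^ k].
Proof.
move=> k_gt0; elim: n => [|n IH]; first by rewrite add0n mul1n.
rewrite addSn /= -addSn dvdn_addl ?dvdn_exp // -[in LHS]modnMm IH modnMm.
case: ifP => _; first by rewrite !mul1n.
by rewrite -mulnA -[in LHS]modnMml -[in RHS]modnMml modnDr.
Qed.

Lemma pfact_shiftM k l n : 0 < k ->
  pfact (n + l * p ^ k) = pfact n * pfact (p ^ k) ^ l %[mod p ^ k].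
Proof.
move=> k_gt0; elim: l => [|l IH]; first by rewrite mul0n addn0 expn0 muln1.
by rewrite mulSnr addnA pfact_shift // -modnMml IH modnMml expnSr mulnA.
Qed.

End PFreeFactorial.

Lemma congr_modnM d a1 a2 b1 b2 : a1 = b1 %[mod d] -> a2 = b2 %[mod d] ->
  a1 * a2 = b1 * b2 %[mod d].
Proof. by move=> e1 e2; rewrite -modnMm e1 e2 modnMm. Qed.

Definition Anat (m : nat) : nat := 'C(3 * m, m) * 'C(6 * m, 3 * m).

Lemma Anat_fact x : Anat x * ((3 * x)`! * (2 * x)`! * x`!) = (6 * x)`!.
Proof.
have h1 := @bin_fact (3 * x) x (leq_pmull x (isT : 0 < 3)).
have h2 := @bin_fact (6 * x) (3 * x) (leq_mul (isT : 3 <= 6) (leqnn x)).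
rewrite (_ : 3 * x - x = 2 * x) in h1; last by lia.
rewrite (_ : 6 * x - 3 * x = 3 * x) in h2; last by lia.
by rewrite -h2 -{2}h1 /Anat; ring.
Qed.

Section ACoefficients.
Variable p : nat.
Hypothesis p23 : p = 2 \/ p = 3.

Local Notation q := (6 %/ p).

Let p_prime : prime p. Proof. by case: p23 => ->. Qed.
Let q_p : q * p = 6. Proof. by case: p23 => ->. Qed.
Let c_p : (q - 1) * p = (q - 1) + 2. Proof. by case: p23 => ->. Qed.
Let q_add_p : q + p = 5. Proof. by case: p23 => ->. Qed.

Lemma Anat_pfact x :
  Anat x * pfact p (p * x) * x`! ^ 2 = p ^ ((q - 1) * x) * pfact p (6 * x).
Proof.
have fact_pq : (3 * x)`! * (2 * x)`! = (p * x)`! * (q * x)`!.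
  by case: p23 => ->; [apply: mulnC | ].
have F6 := fact_pfact p_prime (6 * x); have Fp := fact_pfact p_prime (p * x).
rewrite (_ : 6 * x %/ p = q * x) in F6; last by rewrite -{1}q_p mulnAC mulnK ?prime_gt0.
rewrite mulKn ?prime_gt0 // in Fp.
have pos : 0 < p ^ x * (q * x)`! by rewrite muln_gt0 expn_gt0 prime_gt0 ?fact_gt0.
apply/eqP; rewrite -(eqn_pmul2l pos); apply/eqP.
transitivity (Anat x * ((3 * x)`! * (2 * x)`! * x`!)); first by rewrite fact_pq Fp; ring.
rewrite Anat_fact F6 (_ : q * x = x + (q - 1) * x) ?expnD; first by ring.
by rewrite -mulSn subn1 prednK //; case: p23 => ->.
Qed.

(* By [Anat_pfact] at x and at x %/ p, A(x) / A(x %/ p) = Anum x / Aden x. *)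
Definition Anum x := p ^ ((q - 1) * (x %% p)) * pfact p (6 * x) * pfact p (p * (x %/ p)).
Definition Aden x := pfact p (6 * (x %/ p)) * pfact p (p * x) * pfact p x ^ 2.

Lemma coprime_Aden x : coprime p (Aden x).
Proof. by rewrite /Aden !coprimeMr !(coprime_pfact p_prime). Qed.

Lemma Aden_gt0 x : 0 < Aden x.
Proof. by rewrite /Aden !muln_gt0 !pfact_gt0. Qed.

Lemma Anat_rec x : Anat x * Aden x = Anum x * Anat (x %/ p).
Proof.
set n := x %/ p; set a := x %% p.
have Fx := fact_pfact p_prime x; rewrite -/n in Fx.
have pos : 0 < p ^ (2 * n) * n`! ^ 2 by rewrite muln_gt0 !expn_gt0 fact_gt0 prime_gt0.
apply/eqP; rewrite -(eqn_pmul2l pos); apply/eqP.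
transitivity (Anat x * pfact p (p * x) * x`! ^ 2 * pfact p (6 * n)).
  by rewrite Fx /Aden -/n (_ : 2 * n = n + n) ?expnD; ring.
transitivity (p ^ ((q - 1) * a) * p ^ (2 * n) * pfact p (6 * x)
               * (Anat n * pfact p (p * n) * n`! ^ 2)); last by rewrite /Anum -/n -/a; ring.
rewrite !Anat_pfact (_ : (q - 1) * x = (q - 1) * a + 2 * n + (q - 1) * n) ?expnD.
  by ring.
by rewrite {1}(divn_eq x p) -/n -/a mulnDr (mulnC n p) mulnA c_p; ring.
Qed.

(* Shifting x by m p^(k+1) shifts every pfact argument in Anum and Aden by a multiple
   of p^(k+1), which by [pfact_shiftM] costs a power of W; in both cases the total
   exponent is 7m, since 6 + 1 = q + p + 1 + 1. *)
Section Shift.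
Variables (x m k : nat).
Local Notation x' := (x + m * p ^ k.+1).
Local Notation W := (pfact p (p ^ k.+1)).

Lemma Anum_shift : Anum x' = Anum x * W ^ (7 * m) %[mod p ^ k.+1].
Proof.
have p_gt0 := prime_gt0 p_prime.
rewrite /Anum (_ : x' %% p = x %% p); last by rewrite expnS mulnCA -modnDmr modnMr addn0.
rewrite (_ : x' %/ p = x %/ p + m * p ^ k).
  2: by rewrite expnS mulnCA mulnC divnDMl // mulnC.
rewrite (_ : 6 * x' = 6 * x + 6 * m * p ^ k.+1); last by ring.
rewrite (_ : p * (x %/ p + m * p ^ k) = p * (x %/ p) + m * p ^ k.+1).
  2: by rewrite expnS; ring.
have e6 := pfact_shiftM p (6 * m) (6 * x) (ltn0Sn k).
have ep := pfact_shiftM p m (p * (x %/ p)) (ltn0Sn k).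
rewrite -mulnA.
rewrite (congr_modnM (erefl (p ^ ((q - 1) * (x %% p)) %% p ^ k.+1)) (congr_modnM e6 ep)).
by rewrite [7 * m]mulSnr expnD; congr (_ %% _); ring.
Qed.

Lemma Aden_shift : Aden x' = Aden x * W ^ (7 * m) %[mod p ^ k.+1].
Proof.
have p_gt0 := prime_gt0 p_prime.
rewrite /Aden (_ : x' %/ p = x %/ p + m * p ^ k).
  2: by rewrite expnS mulnCA mulnC divnDMl // mulnC.
rewrite (_ : 6 * (x %/ p + m * p ^ k) = 6 * (x %/ p) + (q * m) * p ^ k.+1).
  2: by rewrite expnS mulnDr -{2}q_p; ring.
rewrite (_ : p * x' = p * x + (p * m) * p ^ k.+1); last by ring.
rewrite (_ : 7 * m = q * m + p * m + m + m) ?expnD; last by rewrite -mulnDl q_add_p; ring.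
have h1 := pfact_shiftM p (q * m) (6 * (x %/ p)) (ltn0Sn k).
have h2 := pfact_shiftM p (p * m) (p * x) (ltn0Sn k).
have h3 := pfact_shiftM p m x (ltn0Sn k).
rewrite -!mulnn !mulnA (congr_modnM (congr_modnM (congr_modnM h1 h2) h3) h3).
by congr (_ %% _); ring.
Qed.

Lemma Anum_Aden_shift : Anum x' * Aden x = Anum x * Aden x' %[mod p ^ k.+1].
Proof.
rewrite (congr_modnM Anum_shift (erefl (Aden x %% _))).
by rewrite (congr_modnM (erefl (Anum x %% _)) Aden_shift); congr (_ %% _); ring.
Qed.

End Shift.

Local Open Scope ring_scope.

Definition Aratio x : rat := (Anum x)%:R / (Aden x)%:R.

Lemma Aden_neq0 x : (Aden x)%:R != 0 :> rat.
Proof. by rewrite pnatr_eq0 -lt0n Aden_gt0. Qed.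

Lemma Aratio_rec x : (Anat x)%:R = Aratio x * (Anat (x %/ p))%:R :> rat.
Proof.
apply: (mulIf (Aden_neq0 x)); rewrite -natrM Anat_rec natrM /Aratio.
by field; apply: Aden_neq0.
Qed.

Lemma pZ_Aratio x : pZ p 0 (Aratio x).
Proof.
exists (Anum x)%:Z, (Aden x); split; first exact: coprime_Aden.
by rewrite /Aratio expr0 mul1r -pmulrn divfK ?Aden_neq0.
Qed.

Lemma Aratio_cong j x m : pZ p j (Aratio (x + m * p ^ j)%N - Aratio x).
Proof.
case: j => [|k]; first by apply: pZB; apply: pZ_Aratio.
set x' := (x + m * p ^ k.+1)%N.
have -> : Aratio x' - Aratio x =
    ((Anum x')%:R * (Aden x)%:R - (Anum x)%:R * (Aden x')%:R) / ((Aden x')%:R * (Aden x)%:R).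
  by rewrite /Aratio; field; rewrite !Aden_neq0.
rewrite -!natrM; apply: pZ_natr_mod => //; first exact: Anum_Aden_shift.
by rewrite coprimeMr !coprime_Aden.
Qed.

End ACoefficients.

Local Open Scope ring_scope.

Record qseries := QSeries { qcoef : nat -> rat }.
Implicit Types f g h : qseries.
HB.instance Definition _ := boolp.gen_eqMixin qseries.
HB.instance Definition _ := boolp.gen_choiceMixin qseries.

Lemma qseries_ext (f g : qseries) : qcoef f =1 qcoef g -> f = g.
Proof. by move: f g => [f] [g] /= /boolp.funext ->. Qed.

Definition qzero := QSeries (fun=> 0).
Definition qopp f := QSeries (fun n => - qcoef f n).
Definition qadd f g := QSeries (fun n => qcoef f n + qcoef g n).
Definition qone := QSeries (fun n => (n == 0)%N%:R).
Definition qmul f g := QSeries (conv (qcoef f) (qcoef g)).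

Lemma qaddA : associative qadd.
Proof. by move=> f g h; apply: qseries_ext => n /=; rewrite addrA. Qed.
Lemma qaddC : commutative qadd.
Proof. by move=> f g; apply: qseries_ext => n /=; rewrite addrC. Qed.
Lemma qadd0 : left_id qzero qadd.
Proof. by move=> f; apply: qseries_ext => n /=; rewrite add0r. Qed.
Lemma qaddN : left_inverse qzero qopp qadd.
Proof. by move=> f; apply: qseries_ext => n /=; rewrite addNr. Qed.

HB.instance Definition _ := GRing.isZmodule.Build qseries qaddA qaddC qadd0 qaddN.

Lemma qmulA : associative qmul.
Proof. by move=> f g h; apply: qseries_ext => n /=; rewrite convA. Qed.
Lemma qmulC : commutative qmul.
Proof. by move=> f g; apply: qseries_ext => n /=; rewrite convC. Qed.
Lemma qmul1 : left_id qone qmul.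
Proof. by move=> f; apply: qseries_ext => n /=; rewrite convC conv_delta. Qed.
Lemma qmulDl : left_distributive qmul qadd.
Proof. by move=> f g h; apply: qseries_ext => n /=; rewrite convDl. Qed.
Lemma qone_neq0 : qone != qzero.
Proof. by apply/eqP => /(congr1 (qcoef^~ 0%N)) /= /eqP; rewrite oner_eq0. Qed.

HB.instance Definition _ :=
  GRing.Zmodule_isComNzRing.Build qseries qmulA qmulC qmul1 qmulDl qone_neq0.

Lemma qcoefD f g n : qcoef (f + g) n = qcoef f n + qcoef g n. Proof. by []. Qed.
Lemma qcoefB f g n : qcoef (f - g) n = qcoef f n - qcoef g n. Proof. by []. Qed.
Lemma qcoefM f g n : qcoef (f * g) n = conv (qcoef f) (qcoef g) n. Proof. by []. Qed.

Lemma qcoef_natM (k : nat) f n : qcoef (k%:R * f) n = k%:R * qcoef f n.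
Proof.
rewrite !mulr_natl; elim: k => [|k IH]; first by rewrite !mulr0n.
by rewrite !mulrS qcoefD IH.
Qed.

Definition qtheta f := QSeries (fun k => qcoef f k * k%:R).

Lemma qtheta1 : qtheta 1 = 0.
Proof. by apply: qseries_ext => -[|k] /=; rewrite ?mulr0 ?mul0r. Qed.

Lemma qthetaM f g : qtheta (f * g) = qtheta f * g + f * qtheta g.
Proof.
apply: qseries_ext => k /=; rewrite /conv mulr_suml -big_split; apply: eq_bigr => i _ /=.
have -> : k%:R = i%:R + (k - i)%:R :> rat by rewrite -natrD subnKC // -ltnS.
by ring.
Qed.

Definition qX := QSeries (fun k => (k == 1)%N%:R).

Lemma qcoefXM0 f : qcoef (qX * f) 0 = 0.
Proof. by rewrite qcoefM /conv big_ord_recl big_ord0 /= mul0r addr0. Qed.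

Lemma qcoefXMS f k : qcoef (qX * f) k.+1 = qcoef f k.
Proof.
rewrite qcoefM /conv big_ord_recl /= mul0r add0r big_ord_recl /= mul1r subSS subn0.
by rewrite big1 ?addr0 // => i _; rewrite /= mul0r.
Qed.

Lemma qX_inj f g : qX * f = qX * g -> f = g.
Proof. by move=> eXfg; apply: qseries_ext => k; rewrite -(qcoefXMS f) -(qcoefXMS g) eXfg. Qed.

Definition qderiv f := QSeries (fun k => qcoef f k.+1 * k.+1%:R).

Lemma qtheta_X f : qtheta f = qX * qderiv f.
Proof. by apply: qseries_ext => -[|k]; rewrite ?qcoefXM0 ?qcoefXMS //= mulr0. Qed.

Lemma qderivM f g : qderiv (f * g) = qderiv f * g + f * qderiv g.
Proof. by apply: qX_inj; rewrite -qtheta_X qthetaM !qtheta_X; ring. Qed.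

Lemma qderiv1 : qderiv 1 = 0.
Proof. by apply: qX_inj; rewrite -qtheta_X qtheta1 mulr0. Qed.

Definition qderivn n f := QSeries (fun k => qcoef f (k + n)%N * ((k + n) ^_ n)%:R).

Lemma qderivn0 f : qderivn 0 f = f.
Proof. by apply: qseries_ext => k /=; rewrite addn0 ffactn0 mulr1. Qed.

Lemma qderivnS n f : qderivn n.+1 f = qderiv (qderivn n f).
Proof.
apply: qseries_ext => k /=; rewrite -mulrA -natrM addnS -addSn ffactnSr.
by rewrite addnK.
Qed.

Lemma qtheta_ratio U Ui V Vi : U * Ui = 1 -> V * Vi = 1 ->
  qtheta (U * Vi) * (V * Ui) = qtheta U * Ui - qtheta V * Vi.
Proof.
move=> UUi VVi; rewrite qthetaM.
have : V * qtheta Vi + qtheta V * Vi = 0 by rewrite addrC -qthetaM VVi qtheta1.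
move/eqP; rewrite addr_eq0 => /eqP V_thVi.
have -> : (qtheta U * Vi + U * qtheta Vi) * (V * Ui)
    = qtheta U * Ui * (V * Vi) + U * Ui * (V * qtheta Vi) by ring.
by rewrite UUi VVi V_thVi mulr1 mul1r.
Qed.

Lemma qderiv_ratio U Ui W : U * Ui = 1 ->
  qderiv W * Ui = qderiv (W * Ui) + W * Ui * (qderiv U * Ui).
Proof.
move=> UUi; have : U * qderiv Ui + qderiv U * Ui = 0 by rewrite addrC -qderivM UUi qderiv1.
move/eqP; rewrite addr_eq0 => /eqP U_dUi.
have dUi : qderiv Ui = - (qderiv U * Ui * Ui).
  by rewrite -[LHS]mul1r -UUi (mulrC U) -(mulrA Ui) U_dUi; ring.
by rewrite qderivM dUi; ring.
Qed.

Lemma mulr1_uniq (R : comPzRingType) (x y z : R) : x * y = 1 -> x * z = 1 -> y = z.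
Proof. by move=> xy xz; rewrite -[y]mulr1 -xz mulrA (mulrC y) xy mul1r. Qed.

Section SeriesCongruences.
Variable p : nat.
Hypothesis p_prime : prime p.

Definition qfrob f := QSeries (frob p (qcoef f)).
Definition qint f := forall n, pZ p 0 (qcoef f n).
Definition qcong e f g := forall n, pZ p e (qcoef f n - qcoef g n).

Lemma qfrobM f g : qfrob (f * g) = qfrob f * qfrob g.
Proof.
have p_gt0 := prime_gt0 p_prime; pose o : 'I_p := Ordinal p_gt0.
have sect0 (b : 'I_p) (h : nat -> rat) : b != o -> psect p b (frob p h) =1 (fun=> 0).
  move=> b_neq0 x; rewrite psect_frob //; case: eqP => // b0.
  by case/eqP: b_neq0; apply: val_inj.
have sect_o (h : nat -> rat) : psect p o (frob p h) =1 h by move=> x; rewrite psect_frob.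
apply: qseries_ext => n; rewrite qcoefM (conv_psect p_gt0) (bigD1 o) //=.
rewrite [X in _ + X]big1 ?addr0 => [|b b_neq0]; last first.
  apply: big1 => c _; case: ifP => // _.
  by rewrite (eq_conv (sect0 b _ b_neq0) (frefl _)) conv0l.
rewrite (bigD1 o) //= [X in _ + X]big1 ?addr0 => [|c c_neq0]; last first.
  by case: ifP => // _; rewrite (eq_conv (frefl _) (sect0 c _ c_neq0)) conv0r.
rewrite addn0 subn0 /frob; case: ifP => // _.
by rewrite (eq_conv (sect_o _) (sect_o _)).
Qed.

Lemma qfrob1 : qfrob 1 = 1.
Proof.
apply: qseries_ext => -[|n] /=; rewrite /frob ?dvdn0 ?div0n //.
case: ifP => // dvd_pn; rewrite (_ : (n.+1 %/ p == 0)%N = false) //.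
by apply/negbTE; rewrite -lt0n divn_gt0 ?prime_gt0 // dvdn_leq.
Qed.

Lemma qfrob_unit f fi : f * fi = 1 -> qfrob f * qfrob fi = 1.
Proof. by move=> ffi; rewrite -qfrobM ffi qfrob1. Qed.

Lemma qtheta_frob f : qtheta (qfrob f) = p%:R * qfrob (qtheta f).
Proof.
apply: qseries_ext => n; rewrite qcoef_natM /= /frob; case: ifP => [dvd_pn|_].
  have -> : n%:R = p%:R * (n %/ p)%:R :> rat by rewrite -natrM mulnC divnK.
  by ring.
by rewrite mul0r mulr0.
Qed.

Lemma pZ_conv e (u v : nat -> rat) n :
  (forall i, pZ p e (u i)) -> (forall i, pZ p 0 (v i)) -> pZ p e (conv u v n).
Proof. by move=> hu hv; apply: pZ_sum => i _; apply: pZMr. Qed.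

Lemma qint_mul f g : qint f -> qint g -> qint (f * g).
Proof. by move=> hf hg n; apply: pZ_conv. Qed.

Lemma qint_theta f : qint f -> qint (qtheta f).
Proof. by move=> hf n; apply: pZMr => //; apply: pZ_nat. Qed.

Lemma qint_deriv f : qint f -> qint (qderiv f).
Proof. by move=> hf n; apply: pZMr => //; apply: pZ_nat. Qed.

Lemma qint_derivn k f : qint f -> qint (qderivn k f).
Proof. by move=> hf n; apply: pZMr => //; apply: pZ_nat. Qed.

Lemma qint_frob f : qint f -> qint (qfrob f).
Proof. by move=> hf n; rewrite /= /frob; case: ifP => _ //; apply: pZ0. Qed.

Lemma qcong_refl e f : qcong e f f.
Proof. by move=> n; rewrite subrr; apply: pZ0. Qed.

Lemma qcong0 f g : qint f -> qint g -> qcong 0 f g.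
Proof. by move=> hf hg n; apply: pZB. Qed.

Lemma qcong_trans e f g h : qcong e f g -> qcong e g h -> qcong e f h.
Proof.
move=> fg gh n.
have -> : qcoef f n - qcoef h n = (qcoef f n - qcoef g n) + (qcoef g n - qcoef h n) by ring.
exact: pZD.
Qed.

Lemma qcongD e f g f' g' : qcong e f g -> qcong e f' g' -> qcong e (f + f') (g + g').
Proof.
move=> fg fg' n; rewrite !qcoefD.
have -> : qcoef f n + qcoef f' n - (qcoef g n + qcoef g' n)
    = (qcoef f n - qcoef g n) + (qcoef f' n - qcoef g' n) by ring.
exact: pZD.
Qed.

Lemma qcongMr e f g h : qcong e f g -> qint h -> qcong e (f * h) (g * h).
Proof. by move=> fg hh n; rewrite !qcoefM -convBl; apply: pZ_conv. Qed.

Lemma qcongM e f g f' g' : qcong e f g -> qcong e f' g' -> qint g -> qint f' ->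
  qcong e (f * f') (g * g').
Proof.
move=> fg fg' ig if'; apply: (@qcong_trans _ _ (g * f')); first exact: qcongMr.
by rewrite ![g * _]mulrC; apply: qcongMr.
Qed.

Lemma qcongV e f g fi gi : qcong e f g -> f * fi = 1 -> g * gi = 1 -> qint fi -> qint gi ->
  qcong e fi gi.
Proof.
move=> fg ffi ggi ifi igi n; rewrite -qcoefB.
have -> : fi - gi = (g - f) * (fi * gi).
  have -> : fi - gi = fi * (g * gi) - gi * (f * fi) by rewrite ffi ggi !mulr1.
  by ring.
rewrite qcoefM; apply: pZ_conv => [i|]; last exact: qint_mul.
by rewrite qcoefB -opprB; apply: pZN.
Qed.

Lemma qcong_theta e f g : qcong e f g -> qcong e (qtheta f) (qtheta g).
Proof. by move=> fg n; rewrite /= -mulrBl; apply: pZMr => //; apply: pZ_nat. Qed.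

Lemma qcong_deriv e f g : qcong e f g -> qcong e (qderiv f) (qderiv g).
Proof. by move=> fg n; rewrite /= -mulrBl; apply: pZMr => //; apply: pZ_nat. Qed.

Lemma qcong_frob e f g : qcong e f g -> qcong e (qfrob f) (qfrob g).
Proof. by move=> fg n; rewrite /= /frob; case: ifP => _ //; rewrite subrr; apply: pZ0. Qed.

Lemma qcong_pM e f g : qcong e f g -> qcong e.+1 (p%:R * f) (p%:R * g).
Proof. by move=> fg n; rewrite !qcoef_natM -mulrBr; apply: pZ_pM. Qed.

Lemma qcong_XM e f g : qcong e (qX * f) (qX * g) -> qcong e f g.
Proof. by move=> fg n; have := fg n.+1; rewrite !qcoefXMS. Qed.

End SeriesCongruences.

Lemma qtheta_frob_split p U Ui V Vi : prime p -> U * Ui = 1 -> V * Vi = 1 ->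
  qtheta U * Ui
  = qtheta (U * qfrob p Vi) * (qfrob p V * Ui) + p%:R * qfrob p (qtheta V * Vi).
Proof.
move=> p_prime UUi VVi; rewrite (qtheta_ratio UUi (qfrob_unit p_prime VVi)).
by rewrite qtheta_frob (qfrobM p_prime); ring.
Qed.

Section IntegerSeries.
Implicit Types a b : pseries.

Lemma size_sinv_upto a n : size (sinv_upto a n) = n.+1.
Proof. by elim: n => //= n IH; rewrite size_rcons IH. Qed.

Lemma nth_sinv_upto a n i : (i <= n)%N -> nth 0 (sinv_upto a n) i = sinv a i.
Proof.
elim: n i => [|n IH] i; first by rewrite leqn0 => /eqP ->.
rewrite leq_eqVlt => /orP [/eqP -> //|lt_in].
by rewrite /= nth_rcons size_sinv_upto lt_in IH.
Qed.

Lemma sinvS a n : sinv a n.+1 = - \sum_(i < n.+1) a i.+1 * sinv a (n - i)%N.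
Proof.
rewrite /sinv /= nth_rcons size_sinv_upto ltnn eqxx; congr (- _).
by apply: eq_bigr => i _; rewrite nth_sinv_upto // leq_subr.
Qed.

Lemma smul_sinv a n : a 0%N = 1 -> smul a (sinv a) n = (n == 0)%N%:R.
Proof.
move=> a0; rewrite /smul big_ord_recl a0 mul1r subn0.
case: n => [|n]; first by rewrite big_ord0 addr0.
by rewrite sinvS addNr.
Qed.

Definition toQ a := QSeries (fun k => (a k)%:~R).

Lemma toQ_smul a b : toQ (smul a b) = toQ a * toQ b.
Proof.
apply: qseries_ext => n; rewrite qcoefM /= /smul /conv rmorph_sum.
by apply: eq_bigr => i _; rewrite rmorphM.
Qed.

Lemma toQ_sinv a : a 0%N = 1 -> toQ a * toQ (sinv a) = 1.
Proof.
by move=> a0; rewrite -toQ_smul; apply: qseries_ext => n /=; rewrite smul_sinv //; case: eqP.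
Qed.

Lemma toQ_scompX p a : toQ (scompX a p) = qfrob p (toQ a).
Proof. by apply: qseries_ext => n /=; rewrite /scompX /frob; case: ifP. Qed.

Lemma toQ_sinv_scompX p a : prime p -> a 0%N = 1 ->
  toQ (sinv (scompX a p)) = qfrob p (toQ (sinv a)).
Proof.
move=> p_prime a0; apply: (@mulr1_uniq _ (toQ (scompX a p))).
  by apply: toQ_sinv; rewrite /scompX dvdn0 div0n.
by rewrite toQ_scompX qfrob_unit // toQ_sinv.
Qed.

Lemma toQ_sderiv n a : toQ (sderiv n a) = qderivn n (toQ a).
Proof. by apply: qseries_ext => k /=; rewrite /sderiv rmorphM rmorph_nat. Qed.

Lemma qint_toQ p a : qint p (toQ a).
Proof. by move=> n; apply: pZ_int. Qed.

Lemma scong_toQ p e a b : qcong p e (toQ a) (toQ b) -> scong (p ^ e)%N%:Z a b.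
Proof. by move=> ab k; apply: pZ_dvdz; rewrite intrB; apply: ab. Qed.

End IntegerSeries.

Section Main.
Variable p : nat.
Hypothesis p23 : p = 2 \/ p = 3.

Let p_prime : prime p. Proof. by case: p23 => ->. Qed.
#[local] Hint Resolve qint_toQ : core.

Local Notation F := (toQ Fser).
Local Notation Fi := (toQ (sinv Fser)).
Local Notation T s := (toQ (Ftrunc p s)).
Local Notation Ti s := (toQ (sinv (Ftrunc p s))).

Lemma Ftrunc0 s : Ftrunc p s 0%N = 1.
Proof. by rewrite /Ftrunc expn_gt0 prime_gt0. Qed.

Let F_unit : F * Fi = 1. Proof. exact: toQ_sinv. Qed.
Let T_unit s : T s * Ti s = 1. Proof. by apply: toQ_sinv; apply: Ftrunc0. Qed.

Lemma dwork_cong_Fser s : qcong p s.+1 (F * qfrob p (T s)) (T s.+1 * qfrob p F).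
Proof.
pose A n : rat := (Anat n)%:R.
have coefF : qcoef F =1 A by move=> n; rewrite /= -pmulrn.
have coefT t : qcoef (T t) =1 trunc p A t.
  by move=> n; rewrite /= /Ftrunc /trunc; case: ifP => // _; rewrite -pmulrn.
move=> n; rewrite !qcoefM /=.
rewrite (eq_conv coefF (eq_frob p (coefT s)) n) (eq_conv (coefT s.+1) (eq_frob p coefF) n).
apply: (dwork_congruence p_prime (g := Aratio p)) => x.
- exact: Aratio_rec.
- exact: pZ_nat.
- exact: pZ_Aratio.
- exact: Aratio_cong.
Qed.

Lemma frob_ratio_cong s : qcong p s.+1 (F * qfrob p Fi) (T s.+1 * qfrob p (Ti s)).
Proof.
have [uF uT] := (qfrob_unit p_prime F_unit, qfrob_unit p_prime (T_unit s)).
have -> : F * qfrob p Fi = F * qfrob p (T s) * (qfrob p Fi * qfrob p (Ti s)).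
  by rewrite -mulrA (mulrCA (qfrob p (T s))) uT mulr1.
have -> : T s.+1 * qfrob p (Ti s) = T s.+1 * qfrob p F * (qfrob p Fi * qfrob p (Ti s)).
  by rewrite -mulrA (mulrA (qfrob p F)) uF mul1r.
apply: qcongMr; first exact: dwork_cong_Fser.
by apply: qint_mul; apply: qint_frob.
Qed.

Lemma log_deriv_cong s : qcong p s (qtheta F * Fi) (qtheta (T s) * Ti s).
Proof.
elim: s => [|s IH].
  by apply: qcong0; apply: qint_mul => //; apply: qint_theta.
rewrite (qtheta_frob_split p_prime F_unit F_unit).
rewrite (qtheta_frob_split p_prime (T_unit s.+1) (T_unit s)).
apply: qcongD; last by apply: qcong_pM; apply: qcong_frob.
apply: qcongM.
- exact/qcong_theta/frob_ratio_cong.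
- apply: (qcongV (frob_ratio_cong s)).
  + by rewrite (mulrC (qfrob p F)) mulrACA F_unit (mulrC (qfrob p Fi)) qfrob_unit ?mul1r.
  + rewrite (mulrC (qfrob p (T s))) mulrACA T_unit (mulrC (qfrob p (Ti s))).
    by rewrite qfrob_unit ?mul1r.
  + by apply: qint_mul => //; apply: qint_frob.
  + by apply: qint_mul => //; apply: qint_frob.
- by apply/qint_theta/qint_mul => //; apply: qint_frob.
- by apply: qint_mul => //; apply: qint_frob.
Qed.

Lemma derivn_ratio_cong s n :
  qcong p s.+1 (qderivn n F * Fi) (qderivn n (T s.+1) * Ti s.+1).
Proof.
have deriv_cong : qcong p s.+1 (qderiv F * Fi) (qderiv (T s.+1) * Ti s.+1).
  by apply: qcong_XM; rewrite !mulrA -!qtheta_X; apply: log_deriv_cong.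
elim: n => [|n IH]; first by rewrite !qderivn0 F_unit T_unit; apply: qcong_refl.
rewrite !qderivnS (qderiv_ratio _ F_unit) (qderiv_ratio _ (T_unit s.+1)).
apply: qcongD; first exact: qcong_deriv.
by apply: qcongM => //; apply: qint_mul => //; [apply: qint_derivn | apply: qint_deriv].
Qed.

End Main.

Theorem lemma3p6 (p : nat) (hp : p = 2%N \/ p = 3%N) (s n : nat) :
  scong (p ^ s.+1)%N%:Z
    (smul Fser (sinv (scompX Fser p)))
    (smul (Ftrunc p s.+1) (sinv (scompX (Ftrunc p s) p)))
  /\
  scong (p ^ s.+1)%N%:Z
    (smul (sderiv n Fser) (sinv Fser))
    (smul (sderiv n (Ftrunc p s.+1)) (sinv (Ftrunc p s.+1))).
Proof.
have p_prime : prime p by case: hp => ->.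
split; apply: scong_toQ; rewrite !toQ_smul.
  rewrite !toQ_sinv_scompX ?Ftrunc0 //; exact: frob_ratio_cong.
by rewrite !toQ_sderiv; apply: derivn_ratio_cong.
Qed.
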